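(* Assume: - the strengthened triangle inequality under the square holds with constant $a_0$; - the forms $\overline a_{l,i}$ provide a positive semi-definite splitting with constant $b_0$; - the subspaces are locally stable with constant $C_1$; - the subspaces admit a level-wise coloring with $k_0$ colors. Then the operator $\mathcal P$ of parallel multilevel subspace correction satisfies $$\kappa_2(\mathcal P)\le C^L\Bigl(1+\frac{b_0C_1}{C-1}\Bigr)(1+k_0L),\qquad C=2(1+a_0b_0C_1).$$
   Context: Let $V_h$ be a finite-dimensional real vector space with a symmetric positive definite bilinear form $a_h$, and $\|v\|_{a_h}=\sqrt{a_h(v,v)}$. Let $L\ge1$ and let $V_{h,0}\subseteq V_{h,1}\subseteq\cdots\subseteq V_{h,L}=V_h$ be nested subspaces. For each level $1\le l\le L$ let $P_l\in\mathbb N$ and let $V_{h,l,i}\subseteq V_{h,l}$, $i=1,\dots,P_l$, be subspaces. For each such $(l,i)$ let $\overline V_{h,l,i}$ be a finite-dimensional real vector space, $r_{l,i}:V_{h,l}\to\overline V_{h,l,i}$ a linear map, and $\overline a_{l,i}$ a symmetric positive semi-definite bilinear form on $\overline V_{h,l,i}$ with seminorm $|w|_{\overline a_{l,i}}=\sqrt{\overline a_{l,i}(w,w)}$. Let $\mathcal P_0:V_h\to V_{h,0}$ and $\mathcal P_{l,i}:V_h\to V_{h,l,i}$ be the $a_h$-orthogonal projections. Set $\mathcal P=\mathcal P_0+\sum_{l=1}^L\sum_{i=1}^{P_l}\mathcal P_{l,i}$ and $\kappa_2(\mathcal P)=\lambda_{\max}(\mathcal P)/\lambda_{\min}(\mathcal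 P)$. Strengthened triangle inequality under the square with constant $a_0>0$: for every $l$ and every choice of $v_{l,i}\in V_{h,l,i}$, $$\Bigl\|\sum_{i}v_{l,i}\Bigr\|_{a_h}^2\le a_0\sum_i\|v_{l,i}\|_{a_h}^2.$$ Positive semi-definite splitting with constant $b_0>0$: for every $l$ and all $v_l\in V_{h,l}$, $$\sum_{i}|r_{l,i}v_l|_{\overline a_{l,i}}^2\le b_0\|v_l\|_{a_h}^2.$$ Local stability with constant $C_1>0$: for every $1\le l\le L$ and every $v_l\in V_{h,l}$ there is a decomposition $v_l=v_{l-1}+\sum_{i}v_{l,i}$ with $v_{l-1}\in V_{h,l-1}$ and $v_{l,i}\in V_{h,l,i}$ such that $\|v_{l,i}\|_{a_h}^2\le C_1|r_{l,i}v_l|_{\overline a_{l,i}}^2$ for all $i$. Level-wise coloring with $k_0$ colors: for each $l$ there is a map $c_l:\{1,\dots,P_l\}\to\{1,\dots,k_0\}$ such that $i\ne j$ and $c_l(i)=c_l(j)$ imply $a_h(v_i,v_j)=0$ for all $v_i\in V_{h,l,i}$ and $v_j\in V_{h,l,j}$. All constants are independent of $l$. *)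

From HB Require Import structures.
From mathcomp Require Import all_boot all_order all_algebra.
From mathcomp Require Import classical_sets reals.
Set Implicit Arguments.
Unset Strict Implicit.
Unset Printing Implicit Defensive.
Import Order.TTheory GRing.Theory Num.Theory.
Local Open Scope ring_scope.
Local Open Scope classical_set_scope.

Definition sym_bilinear (R : realType) (V : lmodType R) (b : V -> V -> R) :=
  (forall u v, b u v = b v u) /\
  (forall (c : R) (u v w : V), b (c *: u + v) w = c * b u w + b v w).

Definition spd_form (R : realType) (V : lmodType R) (b : V -> V -> R) :=
  sym_bilinear b /\ (forall v, v != 0 -> 0 < b v v).

Definition spsd_form (R : realType) (V : lmodType R) (b : V -> V -> R) :=
  sym_bilinear b /\ (forall v, 0 <= b v v).

Definition is_orth_proj (R : realType) (vT : vectType R) (b : vT -> vT -> R)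
    (U : {vspace vT}) (f : vT -> vT) :=
  forall v, f v \in U /\ (forall w, w \in U -> b (v - f v) w = 0).

(* r is linear on the subspace U (r : U -> W) *)
Definition linear_on (R : realType) (vT : vectType R) (W : lmodType R)
    (U : {vspace vT}) (r : vT -> W) :=
  forall (c : R) u v, u \in U -> v \in U -> r (c *: u + v) = c *: r u + r v.

Definition eigenvalues (R : realType) (V : lmodType R) (P : V -> V) : set R :=
  [set lam | exists2 v : V, v != 0 & P v = lam *: v].

Definition lambda_max (R : realType) (V : lmodType R) (P : V -> V) : R :=
  sup (eigenvalues P).
Definition lambda_min (R : realType) (V : lmodType R) (P : V -> V) : R :=
  inf (eigenvalues P).
Definition kappa2 (R : realType) (V : lmodType R) (P : V -> V) : R :=
  lambda_max P / lambda_min P.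

(* The proof is the classical two-sided estimate of the additive Schwarz operator
   P = P_0 + sum_{l,i} P_{l,i} in the energy inner product a:
   - upper bound  a(Pv,v) <= (1 + k0 L) a(v,v): the coarse projection contributes
     at most a(v,v), and on each level the projections onto subspaces of one color
     are mutually a-orthogonal, so each of the k0 color classes contributes at
     most a(v,v);
   - lower bound  a(v,v) <= K_L a(Pv,v): local stability, the splitting bound and
     the strengthened triangle inequality give, level by level, a stable
     decomposition v = v_0 + sum_{l,i} w_{l,i} whose energy is at most K_L a(v,v)
     with K_l = C K_{l-1} + b0 C1, K_0 = 1; Lions' lemma (Cauchy-Schwarz/Young on
     a(v,w) = a(P_j v, w)) turns that into the lower bound. *)
From HB Require Import structures.
From mathcomp Require Import all_boot all_order all_algebra.
From mathcomp Require Import classical_sets reals.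
From mathcomp Require Import ring lra zify boolp.
Set Implicit Arguments.
Unset Strict Implicit.
Unset Printing Implicit Defensive.
Import Order.TTheory GRing.Theory Num.Theory.
Local Open Scope ring_scope.

Section SpdForm.
Variables (R : realType) (vT : vectType R) (a : vT -> vT -> R).
Hypothesis ha : spd_form a.

Lemma a_sym u v : a u v = a v u. Proof. by case: ha => [[]]. Qed.

Lemma aDl u v w : a (u + v) w = a u w + a v w.
Proof. by case: ha => [[_ lin]] _; rewrite -[u]scale1r lin mul1r scale1r. Qed.

Lemma aZl c u w : a (c *: u) w = c * a u w.
Proof.
case: ha => [[_ lin]] _.
have := lin 1 0 0 w; rewrite scale1r addr0 mul1r => a0w.
rewrite -[c *: u]addr0 lin; lra.
Qed.

Lemma a0l w : a 0 w = 0. Proof. by rewrite -(scale0r 0) aZl mul0r. Qed.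

Lemma aBl u v w : a (u - v) w = a u w - a v w.
Proof. by rewrite aDl -scaleN1r aZl mulN1r. Qed.

Lemma aDr u v w : a w (u + v) = a w u + a w v.
Proof. by rewrite !(a_sym w) aDl. Qed.

Lemma aBr u v w : a w (u - v) = a w u - a w v.
Proof. by rewrite !(a_sym w) aBl. Qed.

Lemma aZr c u w : a w (c *: u) = c * a w u.
Proof. by rewrite !(a_sym w) aZl. Qed.

Lemma a_suml I (s : seq I) (p : pred I) (F : I -> vT) w :
  a (\sum_(i <- s | p i) F i) w = \sum_(i <- s | p i) a (F i) w.
Proof. by apply: (big_morph (a^~ w)) => [x y|]; rewrite ?aDl ?a0l. Qed.

Lemma a_sumr I (s : seq I) (p : pred I) (F : I -> vT) w :
  a w (\sum_(i <- s | p i) F i) = \sum_(i <- s | p i) a w (F i).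
Proof. by rewrite a_sym a_suml; apply: eq_bigr => i _; rewrite a_sym. Qed.

Lemma a_ge0 v : 0 <= a v v.
Proof. by case: ha => _ pos; have [->|/pos/ltW] := eqVneq v 0; rewrite ?a0l. Qed.

Lemma a_young K p w : 0 < K -> 2 * a p w <= K * a p p + a w w / K.
Proof.
move=> K0; have := a_ge0 (K *: p - w).
rewrite aBl !aBr !aZl !aZr (a_sym w p) => sq_ge0.
have -> : K * a p p + a w w / K
    = (K * (K * a p p) - K * a p w - (K * a p w - a w w)) / K + 2 * a p w.
  by field; rewrite gt_eqF.
by rewrite lerDr divr_ge0 // ltW.
Qed.

Lemma a_subr_le x y : a (x - y) (x - y) <= 2 * a x x + 2 * a y y.
Proof.
have := a_ge0 (x + y); rewrite aBl !aBr !aDl !aDr (a_sym y x); lra.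
Qed.

Section OrthProj.
Variables (U : {vspace vT}) (f : vT -> vT).
Hypothesis hf : is_orth_proj a U f.

Lemma orth_proj_test v w : w \in U -> a v w = a (f v) w.
Proof. by move=> wU; have [_ /(_ w wU)] := hf v; rewrite aBl; lra. Qed.

Lemma orth_proj_energy v : a (f v) v = a (f v) (f v).
Proof. by have [fvU _] := hf v; rewrite a_sym (orth_proj_test v fvU). Qed.

Lemma orth_proj_le v : a (f v) v <= a v v.
Proof.
have := a_young (f v) v ltr01.
by rewrite orth_proj_energy divr1 mul1r; lra.
Qed.

Lemma orth_proj_young K v w :
  0 < K -> w \in U -> 2 * a v w <= K * a (f v) v + a w w / K.
Proof.
by move=> K0 wU; rewrite (orth_proj_test v wU) orth_proj_energy a_young.
Qed.

End OrthProj.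

(* Projections onto a family of subspaces colored with k colors, where subspaces
   of equal color are mutually a-orthogonal, sum to an operator bounded by k:
   the projections of one color class add up to the projection onto their
   orthogonal sum, hence contribute at most a(v,v). *)
Lemma colored_proj_sum_le n (U : nat -> {vspace vT}) (f : nat -> vT -> vT)
    k (c : nat -> nat) :
  (forall i, (i < n)%N -> is_orth_proj a (U i) (f i)) ->
  (forall i, (i < n)%N -> (1 <= c i <= k)%N) ->
  (forall i j, (i < n)%N -> (j < n)%N -> i != j -> c i = c j ->
     forall u v, u \in U i -> v \in U j -> a u v = 0) ->
  forall v, \sum_(i < n) a (f i v) v <= k%:R * a v v.
Proof.
move=> hf hc horth v.
have color_class_le (q : 'I_k) : \sum_(i < n | c i == q.+1) a (f i v) v <= a v v.
  set u := \sum_(i < n | c i == q.+1) f i v.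
  have uv : a u v = \sum_(i < n | c i == q.+1) a (f i v) v by rewrite a_suml.
  have uu : a u u = a u v.
    rewrite uv a_suml; apply: eq_bigr => i ci; rewrite a_sumr (bigD1 i) //=.
    rewrite big1 ?addr0 => [|j /andP[cj ji]].
      by rewrite (orth_proj_energy (hf i (ltn_ord i))).
    apply: (horth i j) => //; first by apply: contraNneq ji => /val_inj ->.
    - by rewrite (eqP ci) (eqP cj).
    - by case: (hf i (ltn_ord i) v).
    - by case: (hf j (ltn_ord j) v).
  by rewrite -uv; have := a_young u v ltr01; rewrite uu divr1 mul1r; lra.
have -> : \sum_(i < n) a (f i v) v
    = \sum_(q < k) \sum_(i < n | c i == q.+1) a (f i v) v.
  under [RHS]eq_bigr do rewrite big_mkcond.
  rewrite exchange_big; apply: eq_bigr => i _ /=; rewrite -big_mkcond /=.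
  have /andP[c1 ck] := hc i (ltn_ord i).
  have ci_lt : ((c i).-1 < k)%N by rewrite prednK.
  rewrite (big_pred1 (Ordinal ci_lt)) // => q /=.
  apply/eqP/eqP => [ciq|/(congr1 val)/= ->]; last by rewrite prednK.
  by apply: val_inj; rewrite /= ciq.
apply: le_trans (ler_sum _ (fun q _ => color_class_le q)) _.
by rewrite sumr_const card_ord mulr_natl.
Qed.

Lemma kappa2_le (Pop : vT -> vT) K M :
  0 < K -> 0 <= M ->
  (forall v, a v v <= K * a (Pop v) v) ->
  (forall v, a (Pop v) v <= M * a v v) ->
  kappa2 Pop <= K * M.
Proof.
move=> K0 M0 lower upper.
have eig_bounds lam : eigenvalues Pop lam -> 1 <= K * lam /\ lam <= M.
  case=> v v0 ev; have vv0 : 0 < a v v by case: ha => _; apply.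
  move: (lower v) (upper v); rewrite ev aZl => lo up.
  split; rewrite -(ler_pM2r vv0) //.
  by rewrite mul1r -mulrA.
rewrite /kappa2 /lambda_max /lambda_min.
have [[x Ex]|noeig] := pselect (exists x, eigenvalues Pop x); last first.
  have -> : eigenvalues Pop = set0.
    by apply/seteqP; split => y // Ey; exfalso; apply: noeig; exists y.
  by rewrite sup0 inf0 mul0r mulr_ge0 // ltW.
have sup_le : sup (eigenvalues Pop) <= M.
  by apply: ge_sup; [exists x | move=> y /eig_bounds[]].
have inf_ge : 1 <= K * inf (eigenvalues Pop).
  rewrite mulrC -ler_pdivrMr //; apply: lb_le_inf; first by exists x.
  by move=> y /eig_bounds[+ _]; rewrite ler_pdivrMr // mulrC.
have inf0 : 0 < inf (eigenvalues Pop).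
  by rewrite -(pmulr_rgt0 _ K0); apply: lt_le_trans inf_ge.
rewrite ler_pdivrMr //; apply: (le_trans sup_le).
by rewrite -mulrA mulrCA ler_peMr // mulrC.
Qed.

End SpdForm.

Section StabilityConstant.
Variables (R : realType) (C b : R).
Hypotheses (C_gt1 : 1 < C) (b_ge0 : 0 <= b).

(* Closed form of the solution of K_0 = 1, K_{l+1} = C K_l + b: the energy
   constant of the stable decomposition down to level l. *)
Definition stab_const (l : nat) : R := C ^+ l * (1 + b / (C - 1)) - b / (C - 1).

Lemma stab_const0 : stab_const 0 = 1.
Proof. by rewrite /stab_const expr0 mul1r addrK. Qed.

Lemma stab_constS l : stab_const l.+1 = C * stab_const l + b.
Proof. by rewrite /stab_const exprS; field; rewrite subr_eq0 gt_eqF. Qed.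

Lemma stab_const_ge1 l : 1 <= stab_const l.
Proof.
have e0 : 0 <= b / (C - 1) by rewrite divr_ge0 // subr_ge0 ltW.
have := @exprn_ege1 _ l C (ltW C_gt1); rewrite /stab_const; nra.
Qed.

Lemma stab_const_le l : stab_const l <= C ^+ l * (1 + b / (C - 1)).
Proof. by rewrite /stab_const gerBl divr_ge0 // subr_ge0 ltW. Qed.

End StabilityConstant.

Section Multilevel.
Context {R : realType} {vT : vectType R} {a : vT -> vT -> R} {L : nat}
  {Vl : nat -> {vspace vT}} {P : nat -> nat} {Vsub : nat -> nat -> {vspace vT}}.
Hypothesis ha : spd_form a.

Section StableDecomposition.
Local Unset Implicit Arguments.
Context {W : nat -> nat -> vectType R} {r : forall l i, vT -> W l i}
  {abar : forall l i, W l i -> W l i -> R} {a0 b0 C1 : R}.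
Hypotheses (a0_gt0 : 0 < a0) (b0_gt0 : 0 < b0) (C1_gt0 : 0 < C1).
Hypothesis triangle : forall l (v : nat -> vT), (1 <= l <= L)%N ->
  (forall i, (i < P l)%N -> v i \in Vsub l i) ->
  a (\sum_(i < P l) v i) (\sum_(i < P l) v i) <= a0 * \sum_(i < P l) a (v i) (v i).
Hypothesis splitting : forall l v, (1 <= l <= L)%N -> v \in Vl l ->
  \sum_(i < P l) abar l i (r l i v) (r l i v) <= b0 * a v v.
Hypothesis local_stability : forall l v, (1 <= l <= L)%N -> v \in Vl l ->
  exists (v0 : vT) (w : nat -> vT),
    [/\ v0 \in Vl l.-1,
        (forall i, (i < P l)%N -> w i \in Vsub l i /\
           a (w i) (w i) <= C1 * abar l i (r l i v) (r l i v)) &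
        v = v0 + \sum_(i < P l) w i].

(* Growth factor of the decomposition energy per level. *)
Let C := 2 * (1 + a0 * b0 * C1).

Lemma level_const_gt1 : 1 < C.
Proof. have : 0 < a0 * b0 * C1 by rewrite !mulr_gt0. rewrite /C; lra. Qed.

Lemma one_level_split l v : (1 <= l <= L)%N -> v \in Vl l ->
  exists (v' : vT) (w : nat -> vT),
    [/\ v' \in Vl l.-1, (forall i, (i < P l)%N -> w i \in Vsub l i),
        v = v' + \sum_(i < P l) w i,
        a v' v' <= C * a v v &
        \sum_(i < P l) a (w i) (w i) <= b0 * C1 * a v v].
Proof.
move=> hl vl; have [v' [w [v'l hw ev]]] := local_stability _ _ hl vl.
have w_energy : \sum_(i < P l) a (w i) (w i) <= b0 * C1 * a v v.
  apply: le_trans (_ : C1 * (b0 * a v v) <= _); last by rewrite mulrCA mulrA.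
  apply: le_trans (ler_wpM2l (ltW C1_gt0) (splitting _ _ hl vl)).
  by rewrite mulr_sumr; apply: ler_sum => i _; case: (hw i (ltn_ord i)).
have sum_w : a (\sum_(i < P l) w i) (\sum_(i < P l) w i) <= a0 * (b0 * C1 * a v v).
  apply: le_trans (ler_wpM2l (ltW a0_gt0) w_energy).
  by apply: triangle => // i /hw[].
exists v', w; split => //; first by move=> i /hw[].
have -> : v' = v - \sum_(i < P l) w i by rewrite ev addrK.
apply: le_trans (a_subr_le ha _ _) _; rewrite /C; nra.
Qed.

Lemma stable_decomposition l : (l <= L)%N -> forall v, v \in Vl l ->
  exists (v0 : vT) (w : nat -> nat -> vT),
    [/\ v0 \in Vl 0,
        (forall l' i, (1 <= l' <= l)%N -> (i < P l')%N -> w l' i \in Vsub l' i),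
        v = v0 + \sum_(1 <= l' < l.+1) \sum_(i < P l') w l' i &
        a v0 v0 + \sum_(1 <= l' < l.+1) \sum_(i < P l') a (w l' i) (w l' i)
          <= stab_const C (b0 * C1) l * a v v].
Proof.
elim: l => [_ v v0|l IH lL v vl].
  exists v, (fun _ _ => 0); split => //; first by move=> l' i; lia.
    by rewrite big_geq // addr0.
  by rewrite big_geq // addr0 stab_const0 mul1r.
have hl : (1 <= l.+1 <= L)%N by rewrite lL.
have [v' [wl [v'l hwl ev Ev' Ewl]]] := one_level_split _ _ hl vl.
have [v0 [w [v00 hw ev' Ev0]]] := IH (ltnW lL) v' v'l.
pose w' l' i := if l' == l.+1 then wl i else w l' i.
have lower_levels_unchanged (T : nmodType) (F : nat -> (nat -> vT) -> T) :
    \sum_(1 <= l' < l.+1) F l' (w' l') = \sum_(1 <= l' < l.+1) F l' (w l').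
  by apply: eq_big_nat => l' /andP[_ l'l]; rewrite /w' ltn_eqF.
exists v0, w'; split => //.
- move=> l' i hl' hi; rewrite /w'; case: eqP => [E|/eqP ne].
    by subst l'; exact: hwl.
  by apply: hw => //; lia.
- rewrite big_nat_recr //= (lower_levels_unchanged _ (fun l' f => \sum_(i < P l') f i)).
  by rewrite /w' eqxx addrA -ev'.
have C_gt1 := level_const_gt1.
have b_ge0 : 0 <= b0 * C1 by rewrite mulr_ge0 ?ltW.
have K_ge0 := le_trans ler01 (stab_const_ge1 C_gt1 b_ge0 l).
rewrite big_nat_recr //= (lower_levels_unchanged _ (fun l' f => \sum_(i < P l') a (f i) (f i))).
rewrite /w' eqxx addrA (stab_constS _ C_gt1).
have := ler_wpM2l K_ge0 Ev'; nra.
Qed.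

End StableDecomposition.

Section AdditiveOperator.
Context {PP0 : vT -> vT} {PP : nat -> nat -> vT -> vT}.
Hypothesis coarse_proj : is_orth_proj a (Vl 0) PP0.
Hypothesis local_proj : forall l i, (1 <= l <= L)%N -> (i < P l)%N ->
  is_orth_proj a (Vsub l i) (PP l i).

Definition ml_op (v : vT) : vT :=
  PP0 v + \sum_(1 <= l < L.+1) \sum_(i < P l) PP l i v.

Lemma ml_op_energy v : a (ml_op v) v =
  a (PP0 v) v + \sum_(1 <= l < L.+1) \sum_(i < P l) a (PP l i v) v.
Proof.
rewrite /ml_op (aDl ha) (a_suml ha); congr (_ + _).
by apply: eq_bigr => l _; rewrite (a_suml ha).
Qed.

(* Upper bound: the coarse projection contributes at most a(v,v) and every
   level at most k0 a(v,v), one a(v,v) per color class. *)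
Lemma ml_op_upper (k0 : nat) :
  (forall l, (1 <= l <= L)%N -> exists c : nat -> nat,
     (forall i, (i < P l)%N -> (1 <= c i <= k0)%N) /\
     (forall i j, (i < P l)%N -> (j < P l)%N -> i != j -> c i = c j ->
        forall u v, u \in Vsub l i -> v \in Vsub l j -> a u v = 0)) ->
  forall v, a (ml_op v) v <= (1 + k0%:R * L%:R) * a v v.
Proof.
move=> coloring v; rewrite ml_op_energy mulrDl mul1r.
apply: lerD; first exact: (orth_proj_le ha coarse_proj).
have -> : k0%:R * L%:R * a v v = \sum_(1 <= l < L.+1) k0%:R * a v v.
  by rewrite sumr_const_nat subn1 /= mulr_natr; ring.
rewrite big_nat_cond [leRHS]big_nat_cond; apply: ler_sum => l /andP[hl _].
have [c [hc c_orth]] := coloring l hl.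
exact: (colored_proj_sum_le ha (fun i => @local_proj l i hl) hc c_orth).
Qed.

Lemma ml_op_lower (K : R) (v v0 : vT) (w : nat -> nat -> vT) : 0 < K -> v0 \in Vl 0 ->
  (forall l i, (1 <= l <= L)%N -> (i < P l)%N -> w l i \in Vsub l i) ->
  v = v0 + \sum_(1 <= l < L.+1) \sum_(i < P l) w l i ->
  a v0 v0 + \sum_(1 <= l < L.+1) \sum_(i < P l) a (w l i) (w l i) <= K * a v v ->
  a v v <= K * a (ml_op v) v.
Proof.
move=> K0 v00 hw ev energy.
set E := \sum_(1 <= l < L.+1) _ in energy.
have expand : a v v = a v v0 + \sum_(1 <= l < L.+1) \sum_(i < P l) a v (w l i).
  rewrite {2}ev (aDr ha) (a_sumr ha); congr (_ + _).
  by apply: eq_bigr => l _; rewrite (a_sumr ha).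
have coarse : 2 * a v v0 <= K * a (PP0 v) v + a v0 v0 / K.
  exact: (orth_proj_young ha coarse_proj v K0 v00).
have fine : 2 * \sum_(1 <= l < L.+1) \sum_(i < P l) a v (w l i)
    <= K * \sum_(1 <= l < L.+1) \sum_(i < P l) a (PP l i v) v + E / K.
  rewrite /E !mulr_sumr mulr_suml -big_split /= big_nat_cond [leRHS]big_nat_cond.
  apply: ler_sum => l /andP[hl _].
  rewrite !mulr_sumr mulr_suml -big_split /=; apply: ler_sum => i _.
  exact: (orth_proj_young ha (local_proj hl (ltn_ord i)) v K0 (hw l i hl _)).
have : (a v0 v0 + E) / K <= a v v by rewrite ler_pdivrMr // mulrC.
rewrite ml_op_energy mulrDl; lra.
Qed.

End AdditiveOperator.

End Multilevel.
Arguments ml_op {R vT} L P PP0 PP v.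
Theorem theorem3p11 (R : realType) (vT : vectType R) (a : vT -> vT -> R)
  (L : nat) (Vl : nat -> {vspace vT}) (P : nat -> nat)
  (Vsub : nat -> nat -> {vspace vT})
  (W : nat -> nat -> vectType R)
  (r : forall l i, vT -> W l i)
  (abar : forall l i, W l i -> W l i -> R)
  (PP0 : vT -> vT) (PP : nat -> nat -> vT -> vT)
  (a0 b0 C1 : R) (k0 : nat) :
  spd_form a ->
  (1 <= L)%N ->
  (forall l, (l < L)%N -> (Vl l <= Vl l.+1)%VS) ->
  Vl L = fullv ->
  (forall l, (1 <= l <= L)%N -> (0 < P l)%N) ->
  (forall l i, (1 <= l <= L)%N -> (i < P l)%N -> (Vsub l i <= Vl l)%VS) ->
  (forall l i, (1 <= l <= L)%N -> (i < P l)%N -> linear_on (Vl l) (r l i)) ->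
  (forall l i, (1 <= l <= L)%N -> (i < P l)%N -> spsd_form (abar l i)) ->
  is_orth_proj a (Vl 0) PP0 ->
  (forall l i, (1 <= l <= L)%N -> (i < P l)%N -> is_orth_proj a (Vsub l i) (PP l i)) ->
  0 < a0 -> 0 < b0 -> 0 < C1 ->
  (* strengthened triangle inequality under the square *)
  (forall l (v : nat -> vT), (1 <= l <= L)%N ->
     (forall i, (i < P l)%N -> v i \in Vsub l i) ->
     a (\sum_(i < P l) v i) (\sum_(i < P l) v i)
       <= a0 * \sum_(i < P l) a (v i) (v i)) ->
  (* positive semi-definite splitting *)
  (forall l v, (1 <= l <= L)%N -> v \in Vl l ->
     \sum_(i < P l) abar l i (r l i v) (r l i v) <= b0 * a v v) ->
  (* local stability *)
  (forall l v, (1 <= l <= L)%N -> v \in Vl l ->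
     exists (v0 : vT) (w : nat -> vT),
       [/\ v0 \in Vl l.-1,
           (forall i, (i < P l)%N -> w i \in Vsub l i /\
              a (w i) (w i) <= C1 * abar l i (r l i v) (r l i v)) &
           v = v0 + \sum_(i < P l) w i]) ->
  (* level-wise coloring with k0 colors *)
  (forall l, (1 <= l <= L)%N ->
     exists c : nat -> nat,
       (forall i, (i < P l)%N -> (1 <= c i <= k0)%N) /\
       (forall i j, (i < P l)%N -> (j < P l)%N -> i != j -> c i = c j ->
          forall u v, u \in Vsub l i -> v \in Vsub l j -> a u v = 0)) ->
  let Pop := fun v : vT =>
    PP0 v + \sum_(1 <= l < L.+1) \sum_(i < P l) PP l i v in
  let C := 2 * (1 + a0 * b0 * C1) in
  kappa2 Pop <= C ^+ L * (1 + b0 * C1 / (C - 1)) * (1 + k0%:R * L%:R).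
Proof.
move=> ha _ _ full _ _ _ _ coarse local a0_gt0 b0_gt0 C1_gt0 triangle splitting
  stability coloring; cbv zeta.
set C := 2 * (1 + a0 * b0 * C1).
have C_gt1 : 1 < C by apply: level_const_gt1.
have b_ge0 : 0 <= b0 * C1 by rewrite mulr_ge0 ?ltW.
set K := stab_const C (b0 * C1) L.
have K_gt0 : 0 < K by apply: lt_le_trans ltr01 (stab_const_ge1 C_gt1 b_ge0 L).
have M_ge0 : 0 <= 1 + k0%:R * L%:R :> R by rewrite addr_ge0 ?mulr_ge0.
have lower v : a v v <= K * a (ml_op L P PP0 PP v) v.
  have vL : v \in Vl L by rewrite full memvf.
  have [v0 [w [v00 hw ev energy]]] :=
    stable_decomposition ha a0_gt0 b0_gt0 C1_gt0 triangle splitting stability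
      L (leqnn L) v vL.
  exact: (ml_op_lower ha coarse local K_gt0 v00 hw ev energy).
have upper := ml_op_upper ha coarse local coloring.
apply: le_trans (kappa2_le ha K_gt0 M_ge0 lower upper) _.
by rewrite ler_wpM2r // stab_const_le // ltW.
Qed.
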